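(* Let $Q$ be a commutative A-loop and define $x\oplus y = \big( ((xy)\backslash x)\cdot((yx)\backslash y)\big)^{-1}$. Then for all $x,y\in Q$, $x^2y^2 = (x\oplus y)^2$.
   Context: A loop is a set with a binary operation and neutral element $1$ in which all left and right translations $L_x:y\mapsto xy$, $R_x:y\mapsto yx$ are bijections; $\mathrm{Inn}(Q)$ is the stabilizer of $1$ in the group generated by all translations. A commutative A-loop is a commutative loop all of whose inner mappings are automorphisms. $x\backslash y$ denotes the unique $z$ with $xz=y$, $x^{-1}=x\backslash 1$, and $x^2=xx$. *)

(* A loop: a binary operation with neutral element [one] in which all left
   and right translations are bijections.  The bijectivity of L_x : y |-> x y
   and R_x : y |-> y x is expressed by the (necessarily unique) inverse maps
   ldiv x (= L_x^{-1}, i.e. x\y) and rdiv _ x (= R_x^{-1}, i.e. y/x). *)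
Record loop := Loop {
  carrier :> Type;
  mul : carrier -> carrier -> carrier;
  one : carrier;
  ldiv : carrier -> carrier -> carrier;
  rdiv : carrier -> carrier -> carrier;
  mul1q : forall x, mul one x = x;
  mulq1 : forall x, mul x one = x;
  ldivP : forall x y, mul x (ldiv x y) = y;
  ldivK : forall x y, ldiv x (mul x y) = y;
  rdivP : forall x y, mul (rdiv y x) x = y;
  rdivK : forall x y, rdiv (mul y x) x = y
}.

Arguments mul {l}.
Arguments one {l}.
Arguments ldiv {l}.
Arguments rdiv {l}.

Section LoopDefs.
Variable Q : loop.

(* Mlt(Q): the group generated by all translations L_x, R_x (closed under
   composition and inverses); its elements are finite composites of
   translations and their inverses. *)
Inductive mlt : (Q -> Q) -> Prop :=
| mlt_id : mlt (fun y => y)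
| mlt_L (x : Q) (f : Q -> Q) : mlt f -> mlt (fun y => mul x (f y))
| mlt_Linv (x : Q) (f : Q -> Q) : mlt f -> mlt (fun y => ldiv x (f y))
| mlt_R (x : Q) (f : Q -> Q) : mlt f -> mlt (fun y => mul (f y) x)
| mlt_Rinv (x : Q) (f : Q -> Q) : mlt f -> mlt (fun y => rdiv (f y) x).

Definition inner_mapping (f : Q -> Q) : Prop := mlt f /\ f one = one.

(* An automorphism: a bijective homomorphism (elements of Mlt(Q) are
   bijections automatically, but we require it explicitly). *)
Definition automorphism (f : Q -> Q) : Prop :=
  (exists g : Q -> Q, (forall x, g (f x) = x) /\ (forall x, f (g x) = x)) /\
  (forall x y, f (mul x y) = mul (f x) (f y)).

Definition commutative_loop : Prop := forall x y : Q, mul x y = mul y x.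

Definition A_loop : Prop := forall f, inner_mapping f -> automorphism f.

Definition commutative_A_loop : Prop := commutative_loop /\ A_loop.

Definition linv (x : Q) : Q := ldiv x one.
Definition sq (x : Q) : Q := mul x x.

Definition oplus (x y : Q) : Q :=
  linv (mul (ldiv (mul x y) x) (ldiv (mul y x) y)).

End LoopDefs.

Arguments mlt {Q}.
Arguments inner_mapping {Q}.
Arguments automorphism {Q}.
Arguments linv {Q}.
Arguments sq {Q}.
Arguments oplus {Q}.

From Stdlib Require Import Setoid.

(* The inner mappings L(u,v) = L_{uv}^{-1} L_u L_v are automorphisms. They
   give the automorphic inverse property (uv)^{-1} = u^{-1} v^{-1}, the
   commutation of L_u with L_{u^{-1}}, and the identity (vw)^2 = v P_w(v) for
   P_w(v) = w^{-1}\(wv). Writing z = xy, a = z\x, b = z\y and c = a^{-1} b,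
   one gets x^2 = c\t and y^2 = c^{-1}\t with t = (ab)^{-1} = x (+) y, and
   the identity for (vw)^2 with v = c\t, w = c gives (c\t)(c^{-1}\t) = t^2. *)

Section LoopFacts.
Variable Q : loop.

Lemma mulqI (x y y' : Q) : mul x y = mul x y' -> y = y'.
Proof. intro H. rewrite <- (ldivK Q x y), <- (ldivK Q x y'), H. reflexivity. Qed.

Lemma ldiv1q (y : Q) : ldiv one y = y.
Proof. rewrite <- (mul1q Q (ldiv one y)). apply ldivP. Qed.

Lemma mulqV (x : Q) : mul x (linv x) = one.
Proof. apply ldivP. Qed.

Section Automorphisms.
Variable f : Q -> Q.
Hypothesis f_aut : automorphism f.

Lemma aut_mul (x y : Q) : f (mul x y) = mul (f x) (f y).
Proof. apply (proj2 f_aut). Qed.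

Lemma aut_one : f one = one.
Proof. apply (mulqI (f one)). rewrite <- aut_mul, !mulq1. reflexivity. Qed.

Lemma aut_ldiv (x y : Q) : f (ldiv x y) = ldiv (f x) (f y).
Proof. apply (mulqI (f x)). rewrite <- aut_mul, !ldivP. reflexivity. Qed.

Lemma aut_linv (x : Q) : f (linv x) = linv (f x).
Proof. unfold linv. rewrite aut_ldiv, aut_one. reflexivity. Qed.

End Automorphisms.

Definition Lmap (u v w : Q) : Q := ldiv (mul u v) (mul u (mul v w)).

Lemma Lmap_inner (u v : Q) : inner_mapping (Lmap u v).
Proof.
  split.
  - apply (mlt_Linv Q (mul u v) (fun w => mul u (mul v w))),
      (mlt_L Q u (fun w => mul v w)), (mlt_L Q v (fun w => w)), mlt_id.
  - unfold Lmap. rewrite mulq1. rewrite <- (mulq1 Q (mul u v)) at 2. apply ldivK.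
Qed.

Lemma Lmap_of_mul1 (u v w : Q) : mul u v = one -> Lmap u v w = mul u (mul v w).
Proof. intro H. unfold Lmap. rewrite H. apply ldiv1q. Qed.

Lemma Lmap_linv (u v : Q) : Lmap u v (linv v) = ldiv (mul u v) u.
Proof. unfold Lmap. rewrite mulqV, mulq1. reflexivity. Qed.

Hypothesis Hc : commutative_loop Q.

Lemma mulVq (x : Q) : mul (linv x) x = one.
Proof. rewrite Hc. apply mulqV. Qed.

Lemma linvK (x : Q) : linv (linv x) = x.
Proof. apply (mulqI (linv x)). rewrite mulqV, mulVq. reflexivity. Qed.

Lemma Lmap_l (u v : Q) : Lmap u v u = u.
Proof. unfold Lmap. rewrite (Hc v u), (Hc u (mul u v)). apply ldivK. Qed.

Hypothesis HA : A_loop Q.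

Lemma Lmap_aut (u v : Q) : automorphism (Lmap u v).
Proof. apply HA, Lmap_inner. Qed.

Lemma Lmap_r (u v : Q) : Lmap u v v = linv (ldiv (mul u v) u).
Proof. rewrite <- Lmap_linv, <- aut_linv, linvK by apply Lmap_aut. reflexivity. Qed.

Lemma L_linv_comm (x w : Q) :
  mul (linv x) (mul x w) = mul x (mul (linv x) w).
Proof.
  pose proof (Lmap_aut (linv x) x) as Haut.
  assert (Hx : Lmap (linv x) x x = x).
  { rewrite Lmap_r, mulVq, ldiv1q. apply linvK. }
  rewrite <- (ldivP Q x w) at 1.
  rewrite <- (Lmap_of_mul1 _ _ _ (mulVq x)), aut_mul, Hx by exact Haut.
  rewrite Lmap_of_mul1, ldivP by apply mulVq. reflexivity.
Qed.

Lemma linvM (z a : Q) : linv (mul z a) = mul (linv z) (linv a).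
Proof.
  set (x := mul z a). set (y := ldiv x z).
  assert (Hz : mul x y = z) by apply ldivP.
  pose proof (Lmap_aut x y) as Haut.
  assert (E : Lmap x y (ldiv y (linv x)) = linv z).
  { unfold Lmap. rewrite ldivP, mulqV, Hz. reflexivity. }
  rewrite aut_ldiv, aut_linv, Lmap_l, Lmap_r, Hz in E by exact Haut.
  assert (Hza : ldiv z x = a) by apply ldivK.
  rewrite Hza in E. rewrite Hc, <- E. symmetry. apply ldivP.
Qed.

Lemma linv_ldiv (z x : Q) : linv (ldiv z x) = ldiv (linv z) (linv x).
Proof.
  apply (mulqI (linv z)). rewrite ldivP, <- linvM, ldivP. reflexivity.
Qed.

Definition pmap (w v : Q) : Q := ldiv (linv w) (mul w v).

Lemma pmapE (z w : Q) : pmap z w = mul z (ldiv (linv z) w).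
Proof.
  apply (mulqI (linv z)). unfold pmap.
  rewrite ldivP, L_linv_comm, ldivP. reflexivity.
Qed.

Lemma pmap_mul_linv (x y : Q) : pmap (mul x y) (linv x) = mul x (sq y).
Proof.
  assert (Hy : ldiv (mul x y) (mul x (sq y)) = ldiv (linv (mul x y)) (linv x)).
  { rewrite <- linv_ldiv, <- Lmap_r. reflexivity. }
  rewrite pmapE, <- Hy. apply ldivP.
Qed.

Lemma sq_mul (v w : Q) : sq (mul v w) = mul v (pmap w v).
Proof.
  set (r := ldiv (linv v) w).
  assert (Hw : mul (linv v) r = w) by apply ldivP.
  pose proof (pmap_mul_linv (linv v) r) as E.
  rewrite Hw, linvK in E. rewrite E, <- (Lmap_of_mul1 _ _ _ (mulqV v)).
  unfold sq. rewrite (aut_mul _ (Lmap_aut v (linv v))).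
  rewrite Lmap_of_mul1, Hw by apply mulqV. reflexivity.
Qed.

Lemma mul_ldiv_ldiv_linv (c t : Q) : mul (ldiv c t) (ldiv (linv c) t) = sq t.
Proof.
  set (p := ldiv c t).
  assert (Ht : t = mul p c) by (rewrite Hc; symmetry; apply ldivP).
  rewrite Ht, sq_mul, (Hc p c). reflexivity.
Qed.

Lemma sq_ldiv (x y a b : Q) :
  a = ldiv (mul x y) x -> b = ldiv (mul x y) y ->
  sq x = ldiv (mul (linv a) b) (linv (mul a b)).
Proof.
  intros Ha Hb. pose proof (Lmap_aut x y) as Haut.
  assert (fy : Lmap x y y = linv a) by (rewrite Ha; apply Lmap_r).
  assert (fb : Lmap x y (ldiv y (ldiv x y)) = b).
  { unfold Lmap. rewrite !ldivP. symmetry. exact Hb. }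
  set (c := mul (linv a) b).
  assert (Hxa : ldiv x (linv a) = c).
  { rewrite <- (Lmap_l x y), <- fy, <- aut_ldiv by exact Haut.
    rewrite <- (ldivP Q y (ldiv x y)) at 1.
    rewrite aut_mul, fy, fb by exact Haut. reflexivity. }
  assert (Hcx : mul c x = linv a) by (rewrite Hc, <- Hxa; apply ldivP).
  assert (Hlc : linv c = mul a (linv b)) by (unfold c; rewrite linvM, linvK; reflexivity).
  pose proof (pmap_mul_linv c x) as E.
  unfold pmap in E.
  rewrite Hcx, linvK, Hlc, L_linv_comm, ldivK, <- linvM in E.
  rewrite E, ldivK. reflexivity.
Qed.

End LoopFacts.

Theorem theorem4p1 (Q : loop) (HQ : commutative_A_loop Q) (x y : Q) :
  mul (sq x) (sq y) = sq (oplus x y).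
Proof.
  destruct HQ as [Hc HA].
  set (a := ldiv (mul x y) x). set (b := ldiv (mul x y) y).
  assert (Hx : sq x = ldiv (mul (linv a) b) (linv (mul a b)))
    by (apply (sq_ldiv Q Hc HA x y); reflexivity).
  assert (Hy : sq y = ldiv (linv (mul (linv a) b)) (linv (mul a b))).
  { rewrite (sq_ldiv Q Hc HA y x b a) by (rewrite (Hc y x); reflexivity).
    rewrite (Hc b a), (linvM Q Hc HA (linv a) b), (linvK Q Hc), (Hc (linv b) a).
    reflexivity. }
  assert (Ht : oplus x y = linv (mul a b)).
  { unfold oplus. rewrite (Hc y x). reflexivity. }
  rewrite Hx, Hy, Ht. apply (mul_ldiv_ldiv_linv Q Hc HA).
Qed.
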